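(* Suppose $S\subseteq\mathbb{Z}^r$ is integrally-poised for polynomials of degree $n+1$. If $g$ is an integer-valued polynomial in $r$ variables of degree $n$, then there is an equality of subgroups of $\mathbb{Z}^r$: \[ \langle g(\mathbf{x})\mathbf{x}\mid \mathbf{x}\in\mathbb{Z}^r\rangle=\langle g(\mathbf{x})\mathbf{x}\mid \mathbf{x}\in S\rangle . \]
   Context: An integer-valued (numerical) polynomial is a polynomial $f\in\mathbb{Q}[x_1,\ldots,x_r]$ with $f(\mathbf{x})\in\mathbb{Z}$ for all $\mathbf{x}\in\mathbb{Z}^r$. A subset $S\subseteq\mathbb{Z}^r$ is integrally-poised for polynomials of degree $m$ if there exists a family of numerical polynomials $\{c_{\mathbf{a}}\}_{\mathbf{a}\in S}$ such that $f(\mathbf{x})=\sum_{\mathbf{a}\in S}c_{\mathbf{a}}(\mathbf{x})f(\mathbf{a})$ for all polynomials $f$ of degree $m$ and all $\mathbf{x}\in\mathbb{Z}^r$. *)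

From HB Require Import structures.
From mathcomp Require Import all_boot all_order all_algebra.
From mathcomp Require Import finmap mpoly.
Set Implicit Arguments. Unset Strict Implicit. Unset Printing Implicit Defensive.
Import Order.TTheory GRing.Theory Num.Theory.
Local Open Scope ring_scope.
Local Open Scope fset_scope.

(* Points of Z^r are row vectors 'rV[int]_r; polynomials in Q[x_1..x_r] are
   {mpoly rat[r]}.  Evaluation of a polynomial at an integer point. *)
Definition evZ (r : nat) (x : 'rV[int]_r) : 'I_r -> rat := fun i => (x ord0 i)%:~R.

Definition numerical (r : nat) (p : {mpoly rat[r]}) : Prop :=
  forall x : 'rV[int]_r, exists z : int, p.@[evZ x] = z%:~R.

(* "of degree m" = total degree at most m  (msize p = total degree + 1, 0 for p = 0). *)
Definition deg_le (r : nat) (p : {mpoly rat[r]}) (m : nat) : Prop := (msize p <= m.+1)%N.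

Definition integrally_poised (r : nat) (S : {fset 'rV[int]_r}) (m : nat) : Prop :=
  exists c : 'rV[int]_r -> {mpoly rat[r]},
    (forall a, a \in S -> numerical (c a)) /\
    (forall f : {mpoly rat[r]}, deg_le f m ->
       forall x : 'rV[int]_r, f.@[evZ x] = \sum_(a <- S) (c a).@[evZ x] * f.@[evZ a]).

Definition zgen (V : zmodType) (A : V -> Prop) (v : V) : Prop :=
  exists s : seq (int * V), (forall p, p \in s -> A p.2) /\ v = \sum_(p <- s) p.2 *~ p.1.

Definition gpts (r : nat) (g : {mpoly rat[r]}) (P : 'rV[int]_r -> Prop) (v : 'rV[int]_r) : Prop :=
  exists x, P x /\ map_mx (fun z : int => z%:~R : rat) v = g.@[evZ x] *: map_mx (fun z : int => z%:~R : rat) x.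

From mathcomp Require Import all_boot all_order all_algebra.
From mathcomp Require Import finmap mpoly.
Set Implicit Arguments. Unset Strict Implicit. Unset Printing Implicit Defensive.
Import GRing.Theory.
Local Open Scope ring_scope.

(* The j-th coordinate of g(x) x is the value at x of g * 'X_j, a polynomial
   of degree n + 1; interpolating it on S gives
   g(x) x = \sum_(a in S) c_a(x) g(a) a, and both c_a(x) and g(a) are integers.
   So every generator of the left-hand group is an integral combination of the
   generators g(a) a, a in S; the other inclusion is trivial. *)

Section SubgroupGenerated.

Variable V : zmodType.
Implicit Types (A B : V -> Prop) (v w : V).

Lemma mem_zgen A v : A v -> zgen A v.
Proof.
by move=> Av; exists [:: (1, v)]; rewrite big_seq1 mulr1z; split=> // p /[!inE] /eqP ->.
Qed.

Lemma zgenD A v w : zgen A v -> zgen A w -> zgen A (v + w).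
Proof.
case=> s [As ->] [t [At ->]]; exists (s ++ t); split; last by rewrite big_cat.
by move=> p /[!mem_cat] /orP[/As | /At].
Qed.

Lemma zgenMz A v k : zgen A v -> zgen A (v *~ k).
Proof.
case=> s [As ->]; exists [seq (p.1 * k, p.2) | p <- s]; split.
  by move=> _ /mapP[p /As Ap ->].
by rewrite big_map mulrz_suml; apply: eq_bigr => p _; rewrite mulrzA.
Qed.

Lemma zgen_sum A (I : eqType) (s : seq I) (F : I -> V) (k : I -> int) :
  (forall i, i \in s -> zgen A (F i)) -> zgen A (\sum_(i <- s) F i *~ k i).
Proof.
elim: s => [|i s IHs] AF; first by rewrite big_nil; exists [::]; rewrite big_nil.
rewrite big_cons; apply: zgenD; first by apply/zgenMz/AF; rewrite mem_head.
by apply: IHs => j sj; apply: AF; rewrite inE sj orbT.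
Qed.

Lemma zgen_trans A B v : (forall w, A w -> zgen B w) -> zgen A v -> zgen B v.
Proof. by move=> AB [s [As ->]]; apply: zgen_sum => p /As /AB. Qed.

Lemma zgenS A B v : (forall w, A w -> B w) -> zgen A v -> zgen B v.
Proof. by move=> AB; apply: zgen_trans => w /AB /mem_zgen. Qed.

End SubgroupGenerated.

Lemma numerical_numq r (p : {mpoly rat[r]}) :
  numerical p -> forall x, (numq p.@[evZ x])%:~R = p.@[evZ x].
Proof. by move=> p_num x; have [z ->] := p_num x; rewrite numq_int. Qed.

Lemma deg_le_mulX r (p : {mpoly rat[r]}) m (j : 'I_r) :
  deg_le p m -> deg_le (p * 'X_j) m.+1.
Proof.
have [-> _|p_nz] := eqVneq p 0; first by rewrite mul0r /deg_le msize0.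
by rewrite /deg_le msizeM ?msizeX ?mdeg1 ?addn2 // -msupp_eq0 msuppX.
Qed.

Lemma interp_mulX r m (S : {fset 'rV[int]_r}) (c : 'rV[int]_r -> {mpoly rat[r]})
    (f : {mpoly rat[r]}) :
  (forall h : {mpoly rat[r]}, deg_le h m.+1 ->
     forall x, h.@[evZ x] = \sum_(a <- S) (c a).@[evZ x] * h.@[evZ a]) ->
  deg_le f m -> forall x j,
  f.@[evZ x] * (x ord0 j)%:~R
    = \sum_(a <- S) (c a).@[evZ x] * (f.@[evZ a] * (a ord0 j)%:~R).
Proof.
move=> interp f_deg x j; have := interp _ (deg_le_mulX j f_deg) x.
by rewrite mevalM mevalXU => ->; apply: eq_bigr => a _; rewrite mevalM mevalXU.
Qed.

Lemma gpts_scale_numq r (g : {mpoly rat[r]}) (P : 'rV[int]_r -> Prop) a :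
  numerical g -> P a -> gpts g P (a *~ numq g.@[evZ a]).
Proof.
move=> g_num Pa; exists a; split=> //; apply/matrixP => i j.
by rewrite !mxE -scaler_int mxE intrM intz numerical_numq // mulrzr mulrC.
Qed.

Lemma gpts_poised_zgen r n (S : {fset 'rV[int]_r}) (g : {mpoly rat[r]}) w :
  integrally_poised S n.+1 -> numerical g -> deg_le g n ->
  gpts g (fun _ => True) w -> zgen (gpts g (fun x => x \in S)) w.
Proof.
move=> [c [c_num interp]] g_num g_deg [x [_ def_w]].
have -> : w = \sum_(a <- S) (a *~ numq g.@[evZ a]) *~ numq (c a).@[evZ x].
  apply/rowP => j; apply: (@intr_inj rat).
  have := congr1 (fun M : 'rV[rat]_r => M ord0 j) def_w; rewrite !mxE => ->.
  rewrite (interp_mulX interp g_deg x j) summxE rmorph_sum /= !big_seq.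
  apply: eq_bigr => a aS; rewrite -!scaler_int !mxE !intrM !intz.
  by rewrite !numerical_numq //; apply: c_num.
by apply: zgen_sum => a aS; apply/mem_zgen/gpts_scale_numq.
Qed.

Theorem proposition3p4 (r n : nat) (S : {fset 'rV[int]_r}) (g : {mpoly rat[r]}) :
  integrally_poised S n.+1 -> numerical g -> deg_le g n ->
  forall v : 'rV[int]_r,
    zgen (gpts g (fun _ => True)) v <-> zgen (gpts g (fun x => x \in S)) v.
Proof.
move=> S_poised g_num g_deg v; split.
  by apply: zgen_trans => w; apply: gpts_poised_zgen S_poised g_num g_deg.
by apply: zgenS => w [x [_ def_w]]; exists x.
Qed.
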